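(* Let $n\ge 0$ and $i,j\ge -1$ be integers with $i+j=n-1$. Let $p\in\Gamma_n$ with an occurrence $p=bqa$ where $q\in\Gamma_i$. Then: 1. if $i$ is odd, then $a$ is trivial if and only if $\sigma_j(p)\le b$ (i.e. $\sigma_j(p)$, as a suffix of $p$, lies inside $b$); 2. if $i$ is even, then $a$ is a proper prefix of $\mathrm{pre}_p(\sigma_{n-1}(p))$ if and only if $\sigma_j(p)\le b$. Similarly: 1'. if $i$ is odd, then $b$ is trivial if and only if $\pi_j(p)\le a$; 2'. if $i$ is even, then $b$ is a proper suffix of $\mathrm{suf}_p(\pi_{n-1}(p))$ if and only if $\pi_j(p)\le a$.
   Context: Let $\Bbbk$ be a field, $Q=(Q_0,Q_1,s,t)$ a finite quiver, and $A=\Bbbk Q/I$ a finite-dimensional monomial algebra, i.e. $I$ is an ideal generated by paths of length at least $2$. Paths are written from right to left: a path is $p=\alpha_n\cdots\alpha_1$ with arrows $\alpha_i$ and $t(\alpha_i)=s(\alpha_{i+1})$; vertices are the paths of length $0$ (trivial paths, also denoted $1$); $qp$ denotes concatenation when $t(p)=s(q)$. Let $\mathcal B$ be the set of paths not lying in $I$. If $p=bqa$ for paths $a,b,q$, then $q$ is a divisor of $p$; we write $q\le p$ to mean that $q$ is a divisor of $p$ at a fixed position (an occurrence), and then $\mathrm{pre}_p(q):=a$, $\mathrm{suf}_p(q):=b$. If $b$ is trivial, $q$ is a suffix; if $a$ is trivial, $q$ is a prefix; proper means $q\neq p$. Inclusions $\le$ between subpaths of a fixed path refer to their positions in that path. For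 $n\ge -1$, a left $n$-ambiguity is a path $p$ with a decomposition $p=u_{-1}u_0u_1\cdots u_n$ such that $u_{-1}\in Q_0$, $u_0\in Q_1$, $u_i\in\mathcal B$ for all $i$, and for every $0\le i\le n-1$, $u_iu_{i+1}\in I$ while no proper suffix of $u_iu_{i+1}$ lies in $I$ (one writes $p=u_0\cdots u_n$). A right $n$-ambiguity is a path with a decomposition $p=v_n\cdots v_0v_{-1}$ with $v_{-1}\in Q_0$, $v_0\in Q_1$, $v_i\in\mathcal B$, and for $0\le i\le n-1$, $v_{i+1}v_i\in I$ while no proper prefix of $v_{i+1}v_i$ lies in $I$. A path is a left $n$-ambiguity iff it is a right $n$-ambiguity; such paths are called $n$-ambiguities, and $\Gamma_n$ denotes their set. Both decompositions of an $n$-ambiguity are unique. For $p\in\Gamma_n$ with left decomposition $u_0\cdots u_n$ and right decomposition $v_n\cdots v_0$, and $-1\le m\le n$, set $\sigma_m(p):=u_0\cdots u_m$ (a suffix of $p$ which is an $m$-ambiguity) and $\pi_m(p):=v_m\cdots v_0$ (a prefix of $p$ which is an $m$-ambiguity). *)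

From mathcomp Require Import all_boot all_algebra.
Set Implicit Arguments. Unset Strict Implicit. Unset Printing Implicit Defensive.

(* Conventions.
   - A quiver Q = (V, E, src, tgt) with V, E finite types.
   - A path p = α_n ⋯ α_1 (written right to left, α_1 traversed first) is
     represented by the sequence of its arrows IN WRITTEN ORDER
     [:: α_n; ...; α_1].  Hence the concatenation "q p" (p first, then q)
     is literally  q ++ p.  A trivial path (vertex) is the empty sequence;
     inside a fixed path its vertex is determined by its position.
   - Consecutive arrows: in [:: x; y; ...], y is traversed before x, so
     tgt y = src x.
   - The monomial ideal I is given by a finite list R of generating paths
     (each of length >= 2); a path lies in I iff it has a divisor
     (contiguous subpath) belonging to R. *)

Definition is_path (V : eqType) (E : Type) (src tgt : E -> V) (w : seq E) : bool :=
  if w is x :: w' then path (fun x y => tgt y == src x) x w' else true.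

Definition inI (E : eqType) (R : seq (seq E)) (w : seq E) : bool :=
  has (fun r => infix r w) R.

(* Left n-ambiguity decomposition  p = u_{-1} u_0 u_1 ⋯ u_n,
   us = [:: u_0; ...; u_n]  (u_{-1} is the end vertex of p, implicit). *)
Definition is_left_dec (E : eqType) (R : seq (seq E)) (n : int) (p : seq E)
    (us : seq (seq E)) : Prop :=
  (-1 <= n)%R /\ [/\ size us = `|(n + 1)%R|%N, p = flatten us,
      (0 < size us -> size (nth [::] us 0) = 1)%N,
      (forall k, k < size us -> ~~ inI R (nth [::] us k))%N &
      (forall k, k.+1 < size us ->
         let w := nth [::] us k ++ nth [::] us k.+1 in
         inI R w /\ (* no proper suffix (left part) of u_k u_{k+1} lies in I *)
         forall m, m < size w -> ~~ inI R (take m w))%N].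

(* Right n-ambiguity decomposition  p = v_n ⋯ v_0 v_{-1},
   vs = [:: v_0; ...; v_n]  (v_{-1} is the start vertex of p, implicit). *)
Definition is_right_dec (E : eqType) (R : seq (seq E)) (n : int) (p : seq E)
    (vs : seq (seq E)) : Prop :=
  (-1 <= n)%R /\ [/\ size vs = `|(n + 1)%R|%N, p = flatten (rev vs),
      (0 < size vs -> size (nth [::] vs 0) = 1)%N,
      (forall k, k < size vs -> ~~ inI R (nth [::] vs k))%N &
      (forall k, k.+1 < size vs ->
         let w := nth [::] vs k.+1 ++ nth [::] vs k in
         inI R w /\ (* no proper prefix (right part) of v_{k+1} v_k lies in I *)
         forall m, 0 < m <= size w -> ~~ inI R (drop m w))%N].

Definition Gamma (E : eqType) (R : seq (seq E)) (n : int) (p : seq E) : Prop :=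
  exists us, is_left_dec R n p us.

Definition sigma_amb (E : Type) (us : seq (seq E)) (m : int) : seq E :=
  flatten (take `|(m + 1)%R| us).
Definition pi_amb (E : Type) (vs : seq (seq E)) (m : int) : seq E :=
  flatten (rev (take `|(m + 1)%R| vs)).

(* Occurrences (positions) of subpaths inside a fixed path p:
   (k, l) = the subpath made of the written-order entries k, ..., k+l-1 of p
   (k counted from the left end = the end of the path; l = length). *)
Definition occ := (nat * nat)%type.
Definition occ_le (o1 o2 : occ) : Prop :=
  (o2.1 <= o1.1 /\ o1.1 + o1.2 <= o2.1 + o2.2)%N.
(* o1 is a prefix of o2: contained, sharing the right end (start of path). *)
Definition occ_prefix (o1 o2 : occ) : Prop :=
  occ_le o1 o2 /\ (o1.1 + o1.2 = o2.1 + o2.2)%N.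
(* o1 is a suffix of o2: contained, sharing the left end (end of path). *)
Definition occ_suffix (o1 o2 : occ) : Prop :=
  occ_le o1 o2 /\ o1.1 = o2.1.
Definition occ_proper_prefix (o1 o2 : occ) : Prop := occ_prefix o1 o2 /\ o1 <> o2.
Definition occ_proper_suffix (o1 o2 : occ) : Prop := occ_suffix o1 o2 /\ o1 <> o2.

From mathcomp Require Import all_boot all_algebra.
From mathcomp Require Import zify.
Set Implicit Arguments. Unset Strict Implicit. Unset Printing Implicit Defensive.

(* Count positions in p by the number of arrows to their left in the written
   word.  The boundaries 0 = e_0 < e_1 < ... of a left decomposition of p form
   a left chain: [e_k, e_{k+1}) is not in I, whereas [e_k, e_{k+2}) is, and
   minimally so at its right end.  The boundaries of a left decomposition of q,
   shifted by |b|, form a second left chain f in p with f_0 = |b| and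
   f_1 = |b| + 1.  Minimality prevents one chain from overtaking the other by a
   double step: f_t <= e_l forces f_{t+2} <= e_{l+2}, and symmetrically.  As
   n + 1 = (i + 1) + (j + 1), iterating from the comparison of f_0 with
   e_{j+1} = |sigma_j(p)| decides how f_{i+1} = |bq| sits against e_n or
   e_{n+1} = |p|, according to the parity of i.  The boundaries of a right
   decomposition form a decreasing chain d, and the same exchange argument
   gives f_t <= d_{l+2} <-> f_{t+2} <= d_l, which iterates directly. *)

Section Chains.

Variable Iv : nat -> nat -> Prop.
Hypothesis Iv_widen : forall x x' y' y, x <= x' -> y' <= y -> Iv x' y' -> Iv x y.

Definition left_chain (e : nat -> nat) (N : nat) : Prop :=
  [/\ forall k, k < N -> e k < e k.+1,
      forall k, k < N -> ~ Iv (e k) (e k.+1),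
      forall k, k.+2 <= N -> Iv (e k) (e k.+2) &
      forall k y, k.+2 <= N -> e k <= y < e k.+2 -> ~ Iv (e k) y].

Definition right_chain (d : nat -> nat) (N : nat) : Prop :=
  [/\ forall k, k < N -> d k.+1 <= d k,
      forall k, k.+2 <= N -> Iv (d k.+2) (d k) &
      forall k x, k.+2 <= N -> d k.+2 < x <= d k -> ~ Iv x (d k)].

Lemma left_chain_lag e N f K t l : left_chain e N -> left_chain f K ->
  t.+2 <= K -> l.+2 <= N -> f t <= e l -> f t.+2 <= e l.+2.
Proof.
case=> e_lt _ e_I _ [_ _ _ f_min] tK lN fe; rewrite leqNgt; apply/negP => ef.
have e_step : e l < e l.+2 by apply: ltn_trans (e_lt l _) (e_lt l.+1 _); lia.
apply: (f_min t (e l.+2) tK); first by rewrite ef (leq_trans fe) // ltnW.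
exact: Iv_widen fe (leqnn _) (e_I l lN).
Qed.

Lemma left_chain_lag_iter e N f K t l k : left_chain e N -> left_chain f K ->
  t + k.*2 <= K -> l + k.*2 <= N -> f t <= e l -> f (t + k.*2) <= e (l + k.*2).
Proof.
move=> He Hf; elim: k => [|k IHk] tK lN fe; first by rewrite !addn0.
move: tK lN; rewrite doubleS !addnS => tK lN.
by apply: (left_chain_lag He Hf) => //; apply: IHk => //; lia.
Qed.

Lemma left_chain_apart e N f K t l : left_chain e N -> left_chain f K ->
  t < K -> l.+2 <= N -> f t <= e l -> f t.+1 <> e l.+2.
Proof.
case=> _ _ e_I _ [_ f_out _ _] tK lN fe f_eq.
by apply: (f_out t tK); rewrite f_eq; apply: Iv_widen fe (leqnn _) (e_I l lN).
Qed.

Lemma right_left_chain_step d N f K t l : right_chain d N -> left_chain f K ->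
  t.+2 <= K -> l.+2 <= N -> (f t <= d l.+2 <-> f t.+2 <= d l).
Proof.
case=> d_le d_I d_min [f_lt _ f_I f_min] tK lN.
have d_step : d l.+2 <= d l by apply: leq_trans (d_le l.+1 _) (d_le l _); lia.
have f_step : f t < f t.+2 by apply: ltn_trans (f_lt t _) (f_lt t.+1 _); lia.
split=> fd; rewrite leqNgt; apply/negP => df.
- apply: (f_min t (d l) tK); first by rewrite df (leq_trans fd).
  exact: Iv_widen fd (leqnn _) (d_I l lN).
- apply: (d_min l (f t) lN); first by rewrite df (leq_trans (ltnW f_step)).
  exact: Iv_widen (leqnn _) fd (f_I t tK).
Qed.

Lemma right_left_chain_iter d N f K t l k : right_chain d N -> left_chain f K ->
  t + k.*2 <= K -> l + k.*2 <= N -> (f t <= d (l + k.*2) <-> f (t + k.*2) <= d l).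
Proof.
move=> Hd Hf; elim: k t => [|k IHk] t tK lN; first by rewrite !addn0.
move: tK lN; rewrite doubleS !addnS => tK lN.
rewrite (right_left_chain_step Hd Hf) ?IHk -?addSnnS //; lia.
Qed.

Section Interleaving.

Variables (e d f : nat -> nat) (N K J : nat).
Hypotheses (Hf : left_chain f K) (NKJ : N = K + J).
Hypothesis f_start : 0 < K -> f 1 = (f 0).+1.

Section Left.

Hypothesis He : left_chain e N.

Lemma left_chains_behind m : m.*2 < K -> f 0 < e J -> f m.*2.+1 <= e (J + m.*2).
Proof.
move=> mK fe; have f1 : f 1 <= e J by rewrite f_start // (leq_ltn_trans _ mK).
by rewrite -add1n; apply: (left_chain_lag_iter He Hf) => //; lia.
Qed.

Lemma left_chains_ahead m : m.*2 <= K -> e J <= f 0 -> e (J + m.*2) <= f m.*2.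
Proof. by move=> mK ef; rewrite -[m.*2]add0n; apply: (left_chain_lag_iter Hf He) => //; lia. Qed.

Lemma left_chains_even : f K <= e N -> ~~ odd K -> (f K = e N <-> e J <= f 0).
Proof.
move=> fKN /even_halfK K2; split=> [fe | ef]; last first.
  apply/eqP; rewrite eqn_leq fKN /=.
  by have := left_chains_ahead (eq_leq K2) ef; rewrite K2 addnC -NKJ.
rewrite leqNgt; apply/negP => fe0; move: fe; rewrite NKJ addnC.
case: K./2 K2 => [|m] K2.
- by rewrite -K2 addn0 => /= fe; rewrite fe ltnn in fe0.
- have mK : m.*2.+1 < K by rewrite -K2 doubleS.
  rewrite -K2 doubleS !addnS; apply: (left_chain_apart He Hf) => //; first lia.
  by apply: left_chains_behind => //; apply: ltnW.
Qed.

Lemma left_chains_odd : odd K -> (e N.-1 < f K <-> e J <= f 0).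
Proof.
move=> oddK; have K0 : 0 < K by move: oddK; case: (K).
have := odd_halfK oddK; move: K./2 => m K2; have {K2} mK : m.*2.+1 = K by lia.
have -> : N.-1 = J + m.*2 by lia.
split=> [fe | ef].
- rewrite leqNgt; apply/negP => fe0.
  by have := left_chains_behind (eq_leq mK) fe0; rewrite mK leqNgt fe.
- apply: leq_ltn_trans (left_chains_ahead (ltnW (eq_leq mK)) ef) _.
  by case: Hf => f_lt _ _ _; rewrite -mK f_lt // mK.
Qed.

End Left.

Section Right.

Hypothesis Hd : right_chain d N.

Lemma right_left_chains_even : ~~ odd K -> (f 0 <= d N <-> f K <= d J).
Proof.
move=> /even_halfK K2.
have := right_left_chain_iter (t := 0) (l := J) (k := K./2) Hd Hf.
by rewrite K2 add0n (addnC J) -NKJ; apply.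
Qed.

Lemma right_left_chains_odd : odd K -> ((f 0).+1 <= d N.-1 <-> f K <= d J).
Proof.
move=> oddK; have K0 : 0 < K by move: oddK; case: (K).
have := odd_halfK oddK; move: K./2 => m K2; have {K2} mK : 1 + m.*2 = K by lia.
have -> : N.-1 = J + m.*2 by lia.
rewrite -f_start // -mK; apply: (right_left_chain_iter Hd Hf); lia.
Qed.

End Right.
End Interleaving.
End Chains.

Definition slice (T : Type) (s : seq T) (x y : nat) : seq T := drop x (take y s).

Definition boundary (T : Type) (ss : seq (seq T)) (k : nat) : nat :=
  size (flatten (take k ss)).

Lemma infix_slice (T : eqType) (s : seq T) x x' y' y :
  x <= x' -> y' <= y -> infix (slice s x' y') (slice s x y).
Proof.
move=> xx' y'y; rewrite /slice -(take_takel s y'y).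
rewrite -(subnK xx') -drop_drop; apply: infix_trans (infix_drop _ _) _.
case: (leqP x y') => [xy' | y'x].
- by rewrite -(subnK xy') -take_drop infix_take.
- by rewrite drop_oversize ?infix0s // size_take_min geq_min ltnW.
Qed.

Section Slices.

Variable T : Type.
Implicit Types (s : seq T) (ss : seq (seq T)).

Lemma slice1 x0 s k : k < size s -> slice s k k.+1 = [:: nth x0 s k].
Proof. by move=> lt; rewrite /slice -add1n -take_drop (drop_nth x0 lt) /= take0. Qed.

Lemma slice2 x0 s k : k.+1 < size s -> slice s k k.+2 = [:: nth x0 s k; nth x0 s k.+1].
Proof.
move=> lt; rewrite /slice -add2n -take_drop (drop_nth x0 (ltnW lt)) /=.
by rewrite (drop_nth x0 lt) /= take0.
Qed.

Lemma slice_take s x y z : x <= y <= z -> slice s x y = take (y - x) (slice s x z).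
Proof. by case/andP=> xy yz; rewrite /slice take_drop subnK // take_takel. Qed.

Lemma slice_drop s x y z : x <= y -> slice s y z = drop (y - x) (slice s x z).
Proof. by move=> xy; rewrite /slice drop_drop subnK. Qed.

Lemma slice_rev s k l : k <= l <= size s ->
  slice (rev s) (size s - l) (size s - k) = rev (slice s k l).
Proof.
case/andP=> kl ls; rewrite /slice take_rev subKn ?(leq_trans kl) // drop_rev.
by rewrite size_drop (_ : _ - _ = l - k) ?take_drop ?subnK //; lia.
Qed.

Lemma slice_cat_mid (b q a : seq T) x y :
  y <= size q -> slice (b ++ q ++ a) (size b + x) (size b + y) = slice q x y.
Proof.
move=> yq; rewrite /slice takeD take_size_cat // addnC -drop_drop.
by rewrite !drop_size_cat // takel_cat.
Qed.

Lemma take_boundary ss k : take (boundary ss k) (flatten ss) = flatten (take k ss).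
Proof. by rewrite /boundary -{2}(cat_take_drop k ss) flatten_cat take_size_cat. Qed.

Lemma drop_boundary ss k : drop (boundary ss k) (flatten ss) = flatten (drop k ss).
Proof. by rewrite /boundary -{2}(cat_take_drop k ss) flatten_cat drop_size_cat. Qed.

Lemma boundary_slice ss k l :
  k <= l -> boundary ss l = boundary ss k + size (flatten (slice ss k l)).
Proof.
move=> kl; rewrite /boundary /slice -{1}(cat_take_drop k (take l ss)).
by rewrite flatten_cat size_cat take_takel.
Qed.

Lemma slice_flatten ss k l : k <= l ->
  slice (flatten ss) (boundary ss k) (boundary ss l) = flatten (slice ss k l).
Proof.
move=> kl; rewrite {1}/slice take_boundary.
by rewrite /boundary -(take_takel ss kl) drop_boundary.
Qed.

Lemma boundary_mono ss k l : k <= l -> boundary ss k <= boundary ss l.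
Proof. by move=> kl; rewrite (boundary_slice ss kl) leq_addr. Qed.

Lemma boundary_size ss : boundary ss (size ss) = size (flatten ss).
Proof. by rewrite /boundary take_size. Qed.

Lemma boundary_le_size ss k : boundary ss k <= size (flatten ss).
Proof. by rewrite /boundary -{2}(cat_take_drop k ss) flatten_cat size_cat leq_addr. Qed.

End Slices.

Section Decompositions.

Variables (T : eqType) (R : seq (seq T)).

Definition in_slice (s : seq T) (x y : nat) : Prop := inI R (slice s x y).

Lemma inI_infix u w : infix u w -> inI R u -> inI R w.
Proof. by move=> uw /hasP[r rR ru]; apply/hasP; exists r => //; apply: infix_trans uw. Qed.

Lemma in_slice_widen s x x' y' y : x <= x' -> y' <= y -> in_slice s x' y' -> in_slice s x y.
Proof. by move=> xx' y'y; apply: inI_infix; apply: infix_slice. Qed.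

Lemma left_dec_chain n s us : is_left_dec R n s us ->
  left_chain (in_slice s) (boundary us) (size us).
Proof.
case=> _ [_ -> u0 u_out u_pair].
have piece k : k < size us ->
    slice (flatten us) (boundary us k) (boundary us k.+1) = nth [::] us k.
  by move=> lt; rewrite slice_flatten // (slice1 [::] lt) /= cats0.
have pair k : k.+1 < size us ->
    slice (flatten us) (boundary us k) (boundary us k.+2) = nth [::] us k ++ nth [::] us k.+1.
  by move=> lt; rewrite slice_flatten ?leqW // (slice2 [::] lt) /= cats0.
split.
- move=> k lt; rewrite (boundary_slice us (leqnSn k)) (slice1 [::] lt) /= cats0.
  rewrite -[X in X < _]addn0 ltn_add2l; case: k lt => [|k] lt; first by rewrite u0.
  (* u_{k+1} is nonempty, since u_k is not in I but u_k u_{k+1} is *)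
  rewrite lt0n size_eq0; apply: contraNneq (u_out k (ltnW lt)) => uk.
  by have := (u_pair k lt).1; rewrite uk cats0.
- by move=> k lt; rewrite /in_slice piece //; apply/negP/u_out.
- by move=> k lt; rewrite /in_slice pair //; apply: (u_pair k lt).1.
- move=> k y lt /andP[ky yk2]; rewrite /in_slice (@slice_take _ _ _ _ (boundary us k.+2)).
    rewrite pair //; apply/negP/(u_pair k lt).2.
    move: yk2; rewrite (boundary_slice us (leqW (leqnSn k))) (slice2 [::] lt) /=.
    by rewrite cats0; lia.
  by rewrite ky ltnW.
Qed.

Lemma right_dec_chain n s vs : is_right_dec R n s vs ->
  right_chain (in_slice s) (fun k => boundary (rev vs) (size vs - k)) (size vs).
Proof.
case=> _ [_ -> _ _ v_pair].
have pair k : k.+1 < size vs ->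
    flatten (slice (rev vs) (size vs - k.+2) (size vs - k)) = nth [::] vs k.+1 ++ nth [::] vs k.
  by move=> lt; rewrite slice_rev ?(slice2 [::] lt) /= ?cats0 //; lia.
split.
- by move=> k lt; apply: boundary_mono; lia.
- move=> k lt; rewrite /in_slice slice_flatten; last by lia.
  by rewrite pair //; apply: (v_pair k lt).1.
- move=> k x lt /andP[kx xk]; rewrite /in_slice (slice_drop _ _ (ltnW kx)).
  rewrite slice_flatten; last by lia.
  rewrite pair //; apply/negP/(v_pair k lt).2; move: kx xk.
  by rewrite (@boundary_slice _ _ (size vs - k.+2) (size vs - k)) ?pair //; lia.
Qed.

Lemma left_chain_cat_mid (b q a : seq T) f K : left_chain (in_slice q) f K ->
  (forall k, f k <= size q) -> left_chain (in_slice (b ++ q ++ a)) (fun k => size b + f k) K.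
Proof.
have shift x y : y <= size q -> in_slice (b ++ q ++ a) (size b + x) (size b + y) = in_slice q x y.
  by move=> yq; rewrite /in_slice slice_cat_mid.
case=> f_lt f_out f_I f_min fq; split.
- by move=> k lt; rewrite ltn_add2l f_lt.
- by move=> k lt; rewrite shift //; apply: f_out.
- by move=> k lt; rewrite shift //; apply: f_I.
- move=> k y lt /andP[ky yk2]; rewrite -(subnKC (leq_trans (leq_addr _ _) ky)) shift.
    by apply: f_min => //; apply/andP; split; lia.
  by have := fq k.+2; lia.
Qed.

Lemma left_dec_boundary1 n s us : is_left_dec R n s us -> 0 < size us -> boundary us 1 = 1.
Proof.
case=> _ [_ _ +]; case: us => // u us' /(_ isT) /= u1 _ _ _.
by rewrite /boundary /= take0 cats0.
Qed.

End Decompositions.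

Lemma boundary_rev_take (T : Type) (vs : seq (seq T)) K : K <= size vs ->
  boundary (rev vs) (size vs - K) + size (flatten (rev (take K vs))) = size (flatten (rev vs)).
Proof.
move=> Kvs; rewrite /boundary take_rev subKn // -{3}(cat_take_drop K vs) rev_cat.
by rewrite flatten_cat size_cat.
Qed.

Section Occurrences.

Variables (T : eqType) (R : seq (seq T)) (i : int) (p b q a : seq T) (us' : seq (seq T)).
Hypotheses (Hocc : p = b ++ q ++ a) (Hq : is_left_dec R i q us').

Let f k := size b + boundary us' k.

Let widen := @in_slice_widen _ R p.

Let size_p : size p = size b + size q + size a.
Proof. by rewrite Hocc !size_cat addnA. Qed.

Let f_chain : left_chain (in_slice R p) f (size us').
Proof.
have [_ [_ q_us _ _ _]] := Hq.
rewrite Hocc; apply: left_chain_cat_mid; first exact: left_dec_chain Hq.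
by move=> k; rewrite q_us boundary_le_size.
Qed.

Let f0 : f 0 = size b.
Proof. by rewrite /f /boundary take0 addn0. Qed.

Let f_start : 0 < size us' -> f 1 = (f 0).+1.
Proof. by move=> us'0; rewrite f0 /f (left_dec_boundary1 Hq us'0) addn1. Qed.

Let f_end : f (size us') = size b + size q.
Proof. by have [_ [_ q_us _ _ _]] := Hq; rewrite /f boundary_size q_us. Qed.

Lemma sigma_bounds n us J : is_left_dec R n p us -> size us = size us' + J ->
  (~~ odd (size us') -> (a = [::] <-> boundary us J <= size b)) /\
  (odd (size us') -> (boundary us (size us).-1 < size b + size q <-> boundary us J <= size b)).
Proof.
move=> Hus NKJ; have He := left_dec_chain Hus.
have eN : boundary us (size us) = size p.
  by have [_ [_ p_us _ _ _]] := Hus; rewrite boundary_size p_us.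
have fKN : f (size us') <= boundary us (size us) by rewrite f_end eN size_p leq_addr.
split=> [even | odd].
- have := left_chains_even widen f_chain NKJ f_start He fKN even.
  rewrite f_end f0 eN size_p => <-.
  by split=> [-> | sz]; [rewrite addn0 | apply: size0nil; lia].
- by have := left_chains_odd widen f_chain NKJ f_start He odd; rewrite f_end f0.
Qed.

Lemma pi_bounds n vs J : is_right_dec R n p vs -> size vs = size us' + J ->
  (~~ odd (size us') -> (b = [::] <-> size b + size q <= boundary (rev vs) (size vs - J))) /\
  (odd (size us') ->
    (size b < boundary (rev vs) (size vs - (size vs).-1) <->
     size b + size q <= boundary (rev vs) (size vs - J))).
Proof.
move=> Hvs NKJ; have Hd := right_dec_chain Hvs.
split=> [even | odd].
- have := right_left_chains_even widen f_chain NKJ Hd even.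
  rewrite f_end f0 subnn /boundary take0 leqn0 size_eq0 => <-.
  by split=> [-> | /eqP].
- by have := right_left_chains_odd widen f_chain NKJ f_start Hd odd; rewrite f_end f0.
Qed.

End Occurrences.

Lemma occ_le_suffixes x y : occ_le (0, x) (0, y) <-> x <= y.
Proof. by rewrite /occ_le /= !add0n; split=> [[]|]. Qed.

Lemma occ_proper_suffix_suffixes x y : occ_proper_suffix (0, x) (0, y) <-> x < y.
Proof.
rewrite /occ_proper_suffix /occ_suffix occ_le_suffixes; split=> [[[xy _] neq] | xy].
  by rewrite ltn_neqAle xy andbT; apply/eqP => exy; apply: neq; rewrite exy.
by split; [split=> //; apply: ltnW | case=> exy; rewrite exy ltnn in xy].
Qed.

Lemma occ_le_prefixes P x l d : x + l = P -> d <= P ->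
  occ_le (P - d, d) (x, l) <-> x <= P - d.
Proof. by move=> xlP dP; rewrite /occ_le /=; split=> [[]|]; lia. Qed.

Lemma occ_proper_prefix_prefixes P x l y : x + l = P -> y <= P ->
  occ_proper_prefix (x, l) (y, P - y) <-> y < x.
Proof.
move=> xlP yP; rewrite /occ_proper_prefix /occ_prefix /occ_le /=.
split=> [[[[yx _] _] neq] | yx]; last by split; [lia | case; lia].
by rewrite ltn_neqAle yx andbT; apply: contra_not_neq neq => xy; congr pair; lia.
Qed.

Lemma odd_abs_succ (i : int) : (-1 <= i)%R -> odd `|i| = ~~ odd `|(i + 1)%R|.
Proof.
move=> i_ge; have [[-> ->] | ->] : `|i| = 1 /\ `|(i + 1)%R| = 0 \/ `|(i + 1)%R| = `|i|.+1 by lia.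
  by [].
by rewrite /= negbK.
Qed.

Theorem mainTheorem7 (V E : finType) (src tgt : E -> V) (R : seq (seq E))
  (HR : forall r, r \in R -> (2 <= size r)%N /\ is_path src tgt r)
  (Hfd : exists N, forall w, is_path src tgt w -> (N <= size w)%N -> inI R w)
  (n i j : int) (Hn : (0 <= n)%R) (Hi : (-1 <= i)%R) (Hj : (-1 <= j)%R)
  (Hij : (i + j = n - 1)%R)
  (p b q a : seq E) (Hp : is_path src tgt p) (HpG : Gamma R n p)
  (Hocc : p = b ++ q ++ a) (HqG : Gamma R i q) :
  (forall us, is_left_dec R n p us ->
     let a_occ : occ := (size b + size q, size a)%N in
     let b_occ : occ := (0, size b)%N in
     let sj_occ : occ := (0, size (sigma_amb us j))%N in
     let pre_occ : occ :=
       (size (sigma_amb us (n - 1)%R), size p - size (sigma_amb us (n - 1)%R))%N in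
     (odd `|i| -> (a = [::] <-> occ_le sj_occ b_occ)) /\
     (~~ odd `|i| -> (occ_proper_prefix a_occ pre_occ <-> occ_le sj_occ b_occ))) /\
  (forall vs, is_right_dec R n p vs ->
     let a_occ : occ := (size b + size q, size a)%N in
     let b_occ : occ := (0, size b)%N in
     let pj_occ : occ := (size p - size (pi_amb vs j), size (pi_amb vs j))%N in
     let suf_occ : occ := (0, size p - size (pi_amb vs (n - 1)%R))%N in
     (odd `|i| -> (b = [::] <-> occ_le pj_occ a_occ)) /\
     (~~ odd `|i| -> (occ_proper_suffix b_occ suf_occ <-> occ_le pj_occ a_occ))).
Proof.
have [us' Hq] := HqG; have [_ [K_i _ _ _ _]] := Hq.
have size_p : size b + size q + size a = size p by rewrite Hocc !size_cat addnA.
rewrite (odd_abs_succ Hi) -K_i.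
have NKJ N : N = `|(n + 1)%R| -> N = size us' + `|(j + 1)%R| by lia.
have N_pred N : N = `|(n + 1)%R| -> `|(n - 1 + 1)%R| = N.-1 by lia.
split=> [us Hus | vs Hvs] /=.
- have [_ [N_n p_us _ _ _]] := Hus.
  have [even odd] := sigma_bounds Hocc Hq Hus (NKJ _ N_n).
  rewrite occ_le_suffixes; split=> [/even // | /negPn/odd <-].
  rewrite /sigma_amb (N_pred _ N_n) occ_proper_prefix_prefixes // p_us.
  exact: boundary_le_size.
- have [_ [N_n p_vs _ _ _]] := Hvs.
  have [even odd] := pi_bounds Hocc Hq Hvs (NKJ _ N_n).
  have pi_le m : m <= size vs -> size (flatten (rev (take m vs))) <= size p.
    by move=> mN; rewrite p_vs -(boundary_rev_take mN) leq_addl.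
  have pi_compl m : m <= size vs ->
      size p - size (flatten (rev (take m vs))) = boundary (rev vs) (size vs - m).
    by move=> mN; rewrite p_vs -(boundary_rev_take mN) addnK.
  have J_le : `|(j + 1)%R| <= size vs by lia.
  rewrite /pi_amb (N_pred _ N_n) occ_le_prefixes ?pi_le // pi_compl //.
  rewrite pi_compl ?leq_pred // occ_proper_suffix_suffixes.
  by split=> [/even | /negPn/odd].
Qed.
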